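(* Let $W^\pm=(\alpha_1^\pm,\rho_1^\pm,\rho_2^\pm,u_1^\pm,u_2^\pm)$ with $\alpha_1^\pm\in(0,1)$, $\rho_i^\pm>0$, and $S\in\mathbb{R}$ satisfy the Rankine–Hugoniot conditions \begin{align*} &[\![\alpha_1\rho u]\!]=S[\![\alpha_1\rho]\!],\quad [\![\alpha_1\rho_1u_1]\!]=S[\![\alpha_1\rho_1]\!],\quad [\![\rho u]\!]=S[\![\rho]\!],\\ &[\![\alpha_1\rho_1u_1^2+\alpha_2\rho_2u_2^2+\alpha_1p_1+\alpha_2p_2]\!]=S[\![\alpha_1\rho_1u_1+\alpha_2\rho_2u_2]\!],\quad [\![\tfrac12(u_1^2-u_2^2)+\Psi_1-\Psi_2]\!]=S[\![u_1-u_2]\!], \end{align*} and assume $Q:=-\rho^-(u^--S)<0$. Let $\nu\in\{1,2\}$, assume $\rho\mapsto\rho\,a_\nu(\rho)$ is strictly increasing on $(0,\infty)$, and assume $\rho_\nu^-<\rho_\nu^+$. Let $D$ be the energy dissipation \[ D=\sum_{i=1}^2\Big(-S\,[\![\alpha_i\rho_i(\varphi_i+\tfrac12u_i^2)]\!]+[\![\alpha_i\rho_iu_i(\Psi_i+\tfrac12u_i^2)]\!]\Big). \] (a) If $S=u_\nu^+-a_\nu(\rho_\nu^+)$ (the characteristic speed $u_\nu-a_\nu$ on the right coincides with the discontinuity), then $D<0$, i.e. the energy admissibility condition $D\le0$ holds. (b) If $S=u_\nu^--a_\nu(\rho_\nu^-)$ (the characteristic speed $u_\nu-a_\nu$ on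 the left coincides with the discontinuity), then $D>0$, i.e. the energy admissibility condition is violated.
   Context: For $i=1,2$, $p_i:(0,\infty)\to\mathbb{R}$ is smooth with $p_i'>0$, $a_i(\rho)=\sqrt{p_i'(\rho)}$; $\varphi_i$ is an antiderivative of $\rho\mapsto p_i(\rho)/\rho^2$ and $\Psi_i(\rho)=\varphi_i(\rho)+p_i(\rho)/\rho$. For a state: $\alpha_2=1-\alpha_1$, $\rho=\alpha_1\rho_1+\alpha_2\rho_2$, $c_i=\alpha_i\rho_i/\rho$, $u=c_1u_1+c_2u_2$, $p_i=p_i(\rho_i)$, $\varphi_i=\varphi_i(\rho_i)$, $\Psi_i=\Psi_i(\rho_i)$. $[\![f]\!]=f(W^+)-f(W^-)$. This concerns a shock of one phase lying inside a rarefaction fan of phase $\nu$ of the one-dimensional barotropic conservative SHTC two-phase system, the admissibility criterion being $D\le0$. *)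

From Stdlib Require Export Reals.
From Coquelicot Require Export Coquelicot.
Open Scope R_scope.

Record state := mkState { st_a1 : R; st_r1 : R; st_r2 : R; st_u1 : R; st_u2 : R }.

(* Phase-indexed components; phase index i is 1 or 2 (anything else is read as 2). *)
Definition alph (W : state) (i : nat) : R :=
  match i with 1%nat => st_a1 W | _ => 1 - st_a1 W end.
Definition rh (W : state) (i : nat) : R :=
  match i with 1%nat => st_r1 W | _ => st_r2 W end.
Definition vel (W : state) (i : nat) : R :=
  match i with 1%nat => st_u1 W | _ => st_u2 W end.

Definition mrho (W : state) : R := alph W 1 * rh W 1 + alph W 2 * rh W 2.
Definition cfr (W : state) (i : nat) : R := alph W i * rh W i / mrho W.
Definition mu (W : state) : R := cfr W 1 * vel W 1 + cfr W 2 * vel W 2.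

Definition jump (f : state -> R) (Wm Wp : state) : R := f Wp - f Wm.

Definition sound (p : nat -> R -> R) (i : nat) (r : R) : R := sqrt (Derive (p i) r).
Definition Psi (p phi : nat -> R -> R) (i : nat) (r : R) : R := phi i r + p i r / r.

Definition pr (p : nat -> R -> R) (W : state) (i : nat) : R := p i (rh W i).

Definition eos_ok (p phi : nat -> R -> R) (i : nat) : Prop :=
  (forall (n : nat) (x : R), 0 < x -> ex_derive_n (p i) n x) /\
  (forall x, 0 < x -> 0 < Derive (p i) x) /\
  (forall x, 0 < x -> is_derive (phi i) x (p i x / x ^ 2)).

Definition admissible_state (W : state) : Prop :=
  0 < st_a1 W < 1 /\ 0 < st_r1 W /\ 0 < st_r2 W.

Definition RH (p phi : nat -> R -> R) (Wm Wp : state) (S : R) : Prop :=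
  jump (fun W => alph W 1 * mrho W * mu W) Wm Wp = S * jump (fun W => alph W 1 * mrho W) Wm Wp /\
  jump (fun W => alph W 1 * rh W 1 * vel W 1) Wm Wp = S * jump (fun W => alph W 1 * rh W 1) Wm Wp /\
  jump (fun W => mrho W * mu W) Wm Wp = S * jump mrho Wm Wp /\
  jump (fun W => alph W 1 * rh W 1 * vel W 1 ^ 2 + alph W 2 * rh W 2 * vel W 2 ^ 2
                 + alph W 1 * pr p W 1 + alph W 2 * pr p W 2) Wm Wp
    = S * jump (fun W => alph W 1 * rh W 1 * vel W 1 + alph W 2 * rh W 2 * vel W 2) Wm Wp /\
  jump (fun W => / 2 * (vel W 1 ^ 2 - vel W 2 ^ 2) + Psi p phi 1 (rh W 1) - Psi p phi 2 (rh W 2)) Wm Wp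
    = S * jump (fun W => vel W 1 - vel W 2) Wm Wp.

Definition Dterm (p phi : nat -> R -> R) (Wm Wp : state) (S : R) (i : nat) : R :=
  - S * jump (fun W => alph W i * rh W i * (phi i (rh W i) + / 2 * vel W i ^ 2)) Wm Wp
  + jump (fun W => alph W i * rh W i * vel W i * (Psi p phi i (rh W i) + / 2 * vel W i ^ 2)) Wm Wp.

Definition Ddiss (p phi : nat -> R -> R) (Wm Wp : state) (S : R) : R :=
  Dterm p phi Wm Wp S 1 + Dterm p phi Wm Wp S 2.

(* The Rankine-Hugoniot conditions force the volume fraction to be continuous across the
   discontinuity and each phase to carry a continuous mass flux j_i = rho_i (u_i - S).  The
   momentum and relative-velocity conditions then collapse the dissipation to
   D = m [[Psi_nu + (u_nu - S)^2 / 2]], where m = rho^- (u^- - S) > 0 is the mixture mass flux.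
   At fixed flux j the Bernoulli function B_j(r) = Psi_nu(r) + j^2 / (2 r^2) has derivative
   ((r a_nu(r))^2 - j^2) / r^3, so it decreases below and increases above the sonic density
   r a_nu(r) = |j|.  In case (a) j = rho_nu^+ a_nu(rho_nu^+), in case (b)
   j = rho_nu^- a_nu(rho_nu^-), and the monotonicity of r a_nu(r) places the interval
   [rho_nu^-, rho_nu^+] on the correct side of the sonic density. *)

From Stdlib Require Import Lra.

Definition bernoulli_fun (p phi : nat -> R -> R) (i : nat) (j r : R) : R :=
  Psi p phi i r + / 2 * (j / r) ^ 2.

Section Bernoulli.

Variables (p phi : nat -> R -> R) (i : nat).
Hypothesis eos : eos_ok p phi i.

Lemma sound_sq r : 0 < r -> sound p i r ^ 2 = Derive (p i) r.
Proof.
  intro Hr. unfold sound. rewrite <- Rsqr_pow2, Rsqr_sqrt; [reflexivity|].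
  destruct eos as [_ [Hp' _]]. apply Rlt_le, Hp', Hr.
Qed.

Lemma is_derive_bernoulli_fun j r : 0 < r ->
  is_derive (bernoulli_fun p phi i j) r (((r * sound p i r) ^ 2 - j ^ 2) / r ^ 3).
Proof.
  intro Hr. destruct eos as [Hsmooth [_ Hphi']].
  unfold bernoulli_fun, Psi. auto_derive.
  - repeat split; try lra.
    + exists (p i r / r ^ 2). apply Hphi', Hr.
    + apply (Hsmooth 1%nat r Hr).
  - change (Derive (fun x : R => p i x) r) with (Derive (p i) r).
    replace (Derive (fun x : R => phi i x) r) with (p i r / r ^ 2)
      by (symmetry; apply is_derive_unique, Hphi', Hr).
    rewrite Rpow_mult_distr, sound_sq by exact Hr.
    field. lra.
Qed.

Lemma bernoulli_fun_MVT j a b : 0 < a < b ->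
  exists c, a < c < b /\
    bernoulli_fun p phi i j b - bernoulli_fun p phi i j a
    = ((c * sound p i c) ^ 2 - j ^ 2) / c ^ 3 * (b - a).
Proof.
  intros [Ha Hab].
  destruct (MVT_cor2 (bernoulli_fun p phi i j)
              (fun c => ((c * sound p i c) ^ 2 - j ^ 2) / c ^ 3) a b Hab) as [c [Hdiff Hc]].
  - intros c Hc. apply is_derive_Reals, is_derive_bernoulli_fun. lra.
  - exists c. split; assumption.
Qed.

Hypothesis sound_mono : forall x y, 0 < x -> x < y -> x * sound p i x < y * sound p i y.

Lemma sound_flux_nonneg r : 0 < r -> 0 <= r * sound p i r.
Proof. intro Hr. apply Rmult_le_pos; [lra | apply sqrt_pos]. Qed.

Lemma bernoulli_fun_lt_right_sonic a b : 0 < a < b ->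
  bernoulli_fun p phi i (b * sound p i b) b < bernoulli_fun p phi i (b * sound p i b) a.
Proof.
  intros Hab. destruct (bernoulli_fun_MVT (b * sound p i b) a b Hab) as [c [Hc Hdiff]].
  assert (Hsub : 0 <= c * sound p i c < b * sound p i b).
  { split; [apply sound_flux_nonneg | apply sound_mono]; lra. }
  assert (Hslope : ((c * sound p i c) ^ 2 - (b * sound p i b) ^ 2) / c ^ 3 < 0).
  { apply Rdiv_neg_pos; [nra | apply pow_lt; lra]. }
  nra.
Qed.

Lemma bernoulli_fun_gt_left_sonic a b : 0 < a < b ->
  bernoulli_fun p phi i (a * sound p i a) a < bernoulli_fun p phi i (a * sound p i a) b.
Proof.
  intros Hab. destruct (bernoulli_fun_MVT (a * sound p i a) a b Hab) as [c [Hc Hdiff]].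
  assert (Hsuper : 0 <= a * sound p i a < c * sound p i c).
  { split; [apply sound_flux_nonneg | apply sound_mono]; lra. }
  assert (Hslope : 0 < ((c * sound p i c) ^ 2 - (a * sound p i a) ^ 2) / c ^ 3).
  { apply Rdiv_lt_0_compat; [nra | apply pow_lt; lra]. }
  nra.
Qed.

End Bernoulli.

Definition flux (W : state) (S : R) (i : nat) : R := rh W i * (vel W i - S).

Definition bernoulli (p phi : nat -> R -> R) (W : state) (S : R) (i : nat) : R :=
  Psi p phi i (rh W i) + / 2 * (vel W i - S) ^ 2.

Section Phase.

Variables (p phi : nat -> R -> R) (Wm Wp : state) (S : R) (i : nat).
Hypotheses (rhm_pos : 0 < rh Wm i) (rhp_pos : 0 < rh Wp i).
Hypothesis flux_eq : flux Wp S i = flux Wm S i.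

Lemma vel_right_flux : vel Wp i = S + flux Wm S i / rh Wp i.
Proof. rewrite <- flux_eq. unfold flux. field. lra. Qed.

Lemma bernoulli_jump_fun :
  jump (fun W => bernoulli p phi W S i) Wm Wp
  = bernoulli_fun p phi i (flux Wm S i) (rh Wp i)
    - bernoulli_fun p phi i (flux Wm S i) (rh Wm i).
Proof.
  unfold jump, bernoulli, bernoulli_fun. rewrite vel_right_flux. unfold flux. field. lra.
Qed.

Hypothesis alph_eq : alph Wp i = alph Wm i.

Lemma Dterm_flux_form :
  Dterm p phi Wm Wp S i
  = alph Wm i * (flux Wm S i * jump (fun W => bernoulli p phi W S i) Wm Wp
                 + S * (flux Wm S i * jump (fun W => vel W i) Wm Wp
                        + jump (fun W => pr p W i) Wm Wp)).
Proof.
  unfold Dterm, jump, bernoulli, Psi, pr; cbv beta.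
  rewrite alph_eq, vel_right_flux. unfold flux. field. lra.
Qed.

Lemma phase_momentum_jump :
  jump (fun W => alph W i * rh W i * vel W i ^ 2) Wm Wp
  - S * jump (fun W => alph W i * rh W i * vel W i) Wm Wp
  = alph Wm i * flux Wm S i * jump (fun W => vel W i) Wm Wp.
Proof.
  unfold jump; cbv beta. rewrite alph_eq, vel_right_flux. unfold flux. field. lra.
Qed.

End Phase.

Lemma admissible_alph_pos W i : admissible_state W -> (i = 1%nat \/ i = 2%nat) -> 0 < alph W i.
Proof. intros [Ha _] [-> | ->]; simpl; lra. Qed.

Lemma admissible_rh_pos W i : admissible_state W -> (i = 1%nat \/ i = 2%nat) -> 0 < rh W i.
Proof. intros [_ [H1 H2]] [-> | ->]; assumption. Qed.

Lemma mrho_pos W : admissible_state W -> 0 < mrho W.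
Proof. intros [Ha [H1 H2]]. unfold mrho; simpl. nra. Qed.

Lemma mass_flux_split W S : admissible_state W ->
  mrho W * (mu W - S) = alph W 1 * flux W S 1 + alph W 2 * flux W S 2.
Proof.
  intro HW. pose proof (mrho_pos W HW) as Hrho.
  unfold mu, cfr, flux. field_simplify; [| lra].
  unfold mrho. ring.
Qed.

Lemma RH_bernoulli_jump_eq p phi Wm Wp S : RH p phi Wm Wp S ->
  jump (fun W => bernoulli p phi W S 1) Wm Wp = jump (fun W => bernoulli p phi W S 2) Wm Wp.
Proof.
  intros (_ & _ & _ & _ & Hb). unfold jump, bernoulli in *; cbv beta in *. simpl in *. lra.
Qed.

Section Shock.

Variables (p phi : nat -> R -> R) (Wm Wp : state) (S : R).
Hypotheses (Hm : admissible_state Wm) (Hp : admissible_state Wp).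
Hypothesis HRH : RH p phi Wm Wp S.
Hypothesis mass_flux_pos : 0 < mrho Wm * (mu Wm - S).

Lemma RH_mass_flux_eq : mrho Wp * (mu Wp - S) = mrho Wm * (mu Wm - S).
Proof. destruct HRH as (_ & _ & Hmass & _). unfold jump in Hmass. lra. Qed.

Lemma RH_alph_eq i : alph Wp i = alph Wm i.
Proof.
  assert (Ha1 : st_a1 Wp = st_a1 Wm).
  { destruct HRH as (Hvol & _). unfold jump, alph in Hvol.
    assert (Hvol' : st_a1 Wp * (mrho Wp * (mu Wp - S))
                    = st_a1 Wm * (mrho Wm * (mu Wm - S))) by lra.
    rewrite RH_mass_flux_eq in Hvol'.
    assert (Hprod : (st_a1 Wp - st_a1 Wm) * (mrho Wm * (mu Wm - S)) = 0) by lra.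
    apply Rmult_integral in Hprod as [Hprod | Hprod]; lra. }
  destruct i as [| [| i]]; simpl; rewrite ?Ha1; reflexivity.
Qed.

Lemma RH_flux_eq i : (i = 1%nat \/ i = 2%nat) -> flux Wp S i = flux Wm S i.
Proof.
  assert (H1 : flux Wp S 1 = flux Wm S 1).
  { destruct HRH as (_ & Hphase1 & _). unfold jump, flux in *.
    pose proof (RH_alph_eq 1) as Ha. pose proof (admissible_alph_pos Wm 1 Hm (or_introl eq_refl)).
    rewrite Ha in Hphase1. apply (Rmult_eq_reg_l (alph Wm 1)); lra. }
  intros [-> | ->]; [exact H1 |].
  pose proof RH_mass_flux_eq as Hmass.
  rewrite !mass_flux_split, H1, !RH_alph_eq in Hmass by assumption.
  pose proof (admissible_alph_pos Wm 2 Hm (or_intror eq_refl)).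
  apply (Rmult_eq_reg_l (alph Wm 2)); lra.
Qed.

Lemma RH_momentum_balance :
  alph Wm 1 * (flux Wm S 1 * jump (fun W => vel W 1) Wm Wp + jump (fun W => pr p W 1) Wm Wp)
  + alph Wm 2 * (flux Wm S 2 * jump (fun W => vel W 2) Wm Wp + jump (fun W => pr p W 2) Wm Wp)
  = 0.
Proof.
  assert (Hphase : forall i, (i = 1%nat \/ i = 2%nat) ->
    jump (fun W => alph W i * rh W i * vel W i ^ 2) Wm Wp
    - S * jump (fun W => alph W i * rh W i * vel W i) Wm Wp
    = alph Wm i * flux Wm S i * jump (fun W => vel W i) Wm Wp).
  { intros i Hi. apply phase_momentum_jump;
      auto using admissible_rh_pos, RH_flux_eq, RH_alph_eq. }
  pose proof (Hphase 1%nat (or_introl eq_refl)) as Hmom1.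
  pose proof (Hphase 2%nat (or_intror eq_refl)) as Hmom2.
  destruct HRH as (_ & _ & _ & Hmom & _).
  unfold jump in *; cbv beta in *.
  rewrite (RH_alph_eq 1), (RH_alph_eq 2) in *.
  lra.
Qed.

Lemma Ddiss_mass_flux_form nu : (nu = 1%nat \/ nu = 2%nat) ->
  Ddiss p phi Wm Wp S = mrho Wm * (mu Wm - S) * jump (fun W => bernoulli p phi W S nu) Wm Wp.
Proof.
  intro Hnu.
  assert (Hphase : forall i, (i = 1%nat \/ i = 2%nat) ->
    Dterm p phi Wm Wp S i
    = alph Wm i * (flux Wm S i * jump (fun W => bernoulli p phi W S i) Wm Wp
                   + S * (flux Wm S i * jump (fun W => vel W i) Wm Wp
                          + jump (fun W => pr p W i) Wm Wp))).
  { intros i Hi. apply Dterm_flux_form;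
      auto using admissible_rh_pos, RH_flux_eq, RH_alph_eq. }
  unfold Ddiss.
  rewrite (Hphase 1%nat (or_introl eq_refl)), (Hphase 2%nat (or_intror eq_refl)).
  pose proof (f_equal (Rmult S) RH_momentum_balance) as Hmom.
  pose proof (RH_bernoulli_jump_eq p phi Wm Wp S HRH) as HB.
  rewrite mass_flux_split by exact Hm.
  destruct Hnu as [-> | ->]; [rewrite <- HB | rewrite HB]; lra.
Qed.

End Shock.

Theorem mainTheorem4 (p phi : nat -> R -> R) (Wm Wp : state) (S : R) (nu : nat) :
  eos_ok p phi 1 -> eos_ok p phi 2 ->
  admissible_state Wm -> admissible_state Wp ->
  RH p phi Wm Wp S ->
  - mrho Wm * (mu Wm - S) < 0 ->
  (nu = 1%nat \/ nu = 2%nat) ->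
  (forall x y, 0 < x -> x < y -> x * sound p nu x < y * sound p nu y) ->
  rh Wm nu < rh Wp nu ->
  (S = vel Wp nu - sound p nu (rh Wp nu) -> Ddiss p phi Wm Wp S < 0) /\
  (S = vel Wm nu - sound p nu (rh Wm nu) -> Ddiss p phi Wm Wp S > 0).
Proof.
  intros Heos1 Heos2 Hm Hp HRH HQ Hnu Hmono Hr.
  assert (Hmass : 0 < mrho Wm * (mu Wm - S)) by lra.
  assert (Heos : eos_ok p phi nu) by (destruct Hnu as [-> | ->]; assumption).
  pose proof (admissible_rh_pos Wm nu Hm Hnu) as Hrm.
  pose proof (RH_flux_eq p phi Wm Wp S Hm Hp HRH Hmass nu Hnu) as Hflux.
  rewrite (Ddiss_mass_flux_form p phi Wm Wp S Hm Hp HRH Hmass nu Hnu).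
  rewrite bernoulli_jump_fun by (auto using admissible_rh_pos).
  split; intro HS.
  - replace (flux Wm S nu) with (rh Wp nu * sound p nu (rh Wp nu))
      by (rewrite <- Hflux; unfold flux; rewrite HS; ring).
    pose proof (bernoulli_fun_lt_right_sonic p phi nu Heos Hmono _ _ (conj Hrm Hr)).
    nra.
  - replace (flux Wm S nu) with (rh Wm nu * sound p nu (rh Wm nu))
      by (unfold flux; rewrite HS; ring).
    pose proof (bernoulli_fun_gt_left_sonic p phi nu Heos Hmono _ _ (conj Hrm Hr)).
    nra.
Qed.
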